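(* Let $T$ be a tropical curve with a real structure. Then $s(T)\le g(T)+1$, $s(T)\equiv g(T)+1\pmod 2$, and $s(T)\le g(T)-1$ if $a(T)=1$.
   Context: A metric graph is a compact connected metric space locally isometric to star-shaped sets $\{te^{2k\pi i/n}:0\le t<r,k\in\mathbb Z\}\subset\mathbb C$. A tropical curve $T$ is a connected metric space which is the union of a metric graph $\Gamma$ (its finite part) and finitely many unbounded edges $e$, each isometric to $[0,\infty]$ and meeting the closure of $T\setminus e$ exactly in one point $e(0)\in\Gamma$ corresponding to $0$. The genus $g(T)$ is the first Betti number of $T$ (equal to that of $\Gamma$). A real structure on $T$ is an isometry $\iota:T\to T$ with $\iota^2=\mathrm{id}$; $\overline p=\iota(p)$, and $p$ is real if $\overline p=p$. $T(\mathbb R)$ is the set of real points, with finitely many connected components $T_1,\dots,T_{s'}$; $s(T)=\sum_{i}(g(T_i)+1)$, $g(T_i)$ the first Betti number of $T_i$. $a(T)=1$ if some non-real point $p$ is connected to $\overline p$ by a path in $T$ containing no real point, and $a(T)=0$ otherwise. *)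

From HB Require Import structures.
From mathcomp Require Import all_boot all_order all_algebra.
From mathcomp Require Import reals.

Set Implicit Arguments.
Unset Strict Implicit.
Unset Printing Implicit Defensive.

Import Order.TTheory GRing.Theory Num.Theory.
Local Open Scope ring_scope.

Definition graph_adj (V E : finType) (src tgt : E -> V) : rel V :=
  fun u v => [exists e, ((src e == u) && (tgt e == v)) || ((src e == v) && (tgt e == u))].

(* A tropical curve T given by a model: finite multigraph (loops and multiple
   edges allowed) with vertices rV, bounded edges rE of length len e > 0, and
   unbounded edges (legs) rL attached at base l.  A real structure is an
   isometric involution, given on the model by involutions conjV, conjE, conjL
   compatible with incidences and lengths; an edge with conjE e = e is fixed
   pointwise (every real structure admits such an adapted model, after
   subdividing the edges reversed by the involution at their midpoints). *)
Record rtcurve (R : realType) := RTCurve {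
  rV : finType;
  rE : finType;
  rL : finType;
  src : rE -> rV;
  tgt : rE -> rV;
  base : rL -> rV;
  len : rE -> R;
  len_pos : forall e, 0 < len e;
  conjV : rV -> rV;
  conjE : rE -> rE;
  conjL : rL -> rL;
  conjV_inv : involutive conjV;
  conjE_inv : involutive conjE;
  conjL_inv : involutive conjL;
  conj_src : forall e, src (conjE e) = conjV (src e);
  conj_tgt : forall e, tgt (conjE e) = conjV (tgt e);
  conj_base : forall l, base (conjL l) = conjV (base l);
  conj_len : forall e, len (conjE e) = len e;
  rV_nonempty : (0 < #|rV|)%N;
  rconnected : forall u v, connect (graph_adj src tgt) u v
}.

Section Invariants.
Variables (R : realType) (T : rtcurve R).

(* first Betti number of the (connected) curve: |E| - |V| + 1 (legs do not
   change it) *)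
Definition genus : int := #|rE T|%:Z - #|rV T|%:Z + 1.

Definition realV : {set rV T} := [set v | conjV v == v].
Definition realE : {set rE T} := [set e | conjE e == e].

Definition real_adj : rel (rV T) :=
  fun u v => [exists e in realE,
    ((src e == u) && (tgt e == v)) || ((src e == v) && (tgt e == u))].

(* connected components T_1, ..., T_s' of T(R) (real legs are contractible
   and attached at real vertices, so they do not affect components or genus) *)
Definition real_comp (v : rV T) : {set rV T} := [set u | connect real_adj v u].
Definition real_components : {set {set rV T}} := [set real_comp v | v in realV].

Definition comp_genus (C : {set rV T}) : int :=
  #|[set e in realE | src e \in C]|%:Z - #|C|%:Z + 1.

Definition s_inv : int := \sum_(C in real_components) (comp_genus C + 1).

Definition node := ((rV T + rE T) + rL T)%type.

Definition conjN (x : node) : node :=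
  match x with
  | inl (inl v) => inl (inl (conjV v))
  | inl (inr e) => inl (inr (conjE e))
  | inr l => inr (conjL l)
  end.

Definition nonreal (x : node) : bool := conjN x != x.

Definition incident (x y : node) : bool :=
  match x, y with
  | inl (inr e), inl (inl v) => (src e == v) || (tgt e == v)
  | inr l, inl (inl v) => base l == v
  | _, _ => false
  end.

(* adjacency of non-real cells; its connected components are those of T \ T(R) *)
Definition nr_adj : rel node :=
  fun x y => [&& nonreal x, nonreal y & incident x y || incident y x].

Definition a_inv : bool := [exists x, nonreal x && connect nr_adj x (conjN x)].

End Invariants.

From mathcomp Require Import all_boot all_order all_algebra.
From mathcomp Require Import reals.
From mathcomp Require Import zify.

(* The involution induces a quotient graph of T: its vertices are the
   components of T(R) and the pairs of conjugate non-real vertices, its edges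
   the pairs of conjugate non-real edges.  Counting cells gives
   g(T) + 1 - s(T) = 2 b1(Q) for this connected quotient graph Q, whence the
   inequality and the parity.  If Q is a tree, every Z/2-valued function on its
   edges is a coboundary; this selects one cell from each conjugate pair
   consistently, splitting T \ T(R) into two conjugate halves, so a(T) = 0. *)

Set Implicit Arguments.
Unset Strict Implicit.
Unset Printing Implicit Defensive.

Import GRing.Theory.

Section SpanningTree.
Variables (V E : finType) (src tgt : E -> V) (B : {set E}).

Definition edge_adj : rel V := fun u v => [exists e in B,
  ((src e == u) && (tgt e == v)) || ((src e == v) && (tgt e == u))].

Lemma edge_adj_sym : symmetric edge_adj.
Proof.
move=> u v; apply/existsP/existsP => -[e /andP [eB uv]];
  by exists e; rewrite eB orbC.
Qed.

Variable root : V.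

Definition reach : {set V} := [set u | connect edge_adj root u].

Definition path_to (u : V) (n : nat) : bool :=
  [exists t : n.-tuple V, path edge_adj root t && (last root t == u)].

(* The distance from [root]; it is [#|V|] (junk) on unreachable vertices. *)
Definition dist (u : V) : nat := find (path_to u) (iota 0 #|V|).

Lemma dist_le_size p u :
  path edge_adj root p -> last root p = u -> size p < #|V| -> dist u <= size p.
Proof.
move=> pp lp sp; rewrite leqNgt; apply/negP => /(before_find 0).
rewrite nth_iota // add0n => notp.
suff : path_to u (size p) by rewrite notp.
by apply/existsP; exists (in_tuple p); rewrite pp lp eqxx.
Qed.

Lemma dist_reach u :
  u \in reach -> path_to u (dist u) && (dist u < #|V|).
Proof.
rewrite inE => /connectP [p0 pp0 ->].
have [p pp up _] := shortenP pp0.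
have sp : size p < #|V|.
  by rewrite -ltnS -[(size p).+1]/(size (root :: p)) -(card_uniqP up) ltnS max_card.
have hp : has (path_to (last root p)) (iota 0 #|V|).
  apply/hasP; exists (size p); first by rewrite mem_iota.
  by apply/existsP; exists (in_tuple p); rewrite pp eqxx.
have hf := hp; rewrite has_find size_iota in hf.
by have := nth_find 0 hp; rewrite nth_iota // add0n => ->.
Qed.

Definition other_end (u : V) (e : E) : V := if src e == u then tgt e else src e.

Definition descends (u : V) (e : E) : bool := (e \in B) &&
  (((src e == u) && (dist (tgt e) < dist u)) ||
   ((tgt e == u) && (dist (src e) < dist u))).

Definition parent (u : V) : option E := [pick e | descends u e].

Lemma dist_other_end u e : descends u e -> dist (other_end u e) < dist u.
Proof.
rewrite /descends /other_end => /andP [_ /orP [/andP [/eqP -> //]|]].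
  by rewrite eqxx.
case/andP => /eqP tu; case: eqP => [su|//]; by rewrite su -tu ltnn.
Qed.

Lemma descends_exists u : u \in reach -> u != root -> exists e, descends u e.
Proof.
move=> ur nu; case/andP: (dist_reach ur) => /existsP [[s /= /eqP sz]].
case/andP=> ps /eqP ls du; move: ps ls du sz.
case/lastP: s => [/= _ lu|q w]; first by rewrite lu eqxx in nu.
rewrite rcons_path last_rcons size_rcons => /andP [pq qw] wu du sz; subst w.
have dq : dist (last root q) <= size q.
  by apply: dist_le_size pq erefl _; apply: ltn_trans du; rewrite -sz.
case/existsP: qw => e /andP [eB qwe]; exists e; rewrite /descends eB -sz.
by case/orP: qwe => /andP [/eqP -> /eqP ->]; rewrite eqxx !ltnS dq ?orbT.
Qed.

Lemma descends_inj u u' e : descends u e -> descends u' e -> u = u'.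
Proof.
rewrite /descends => /andP [_ de] /andP [_ de'].
by case/orP: de => /andP [/eqP <- ?]; case/orP: de' => /andP [/eqP <- ?] //; lia.
Qed.

Lemma parent_descends u : u \in reach :\ root ->
  exists2 e, parent u = Some e & descends u e.
Proof.
rewrite in_setD1 => /andP [nu ur]; rewrite /parent; case: pickP => [e de|none].
  by exists e.
by have [e] := descends_exists ur nu; rewrite none.
Qed.

Lemma parent_inj : {in reach :\ root &, injective parent}.
Proof.
move=> u u' /parent_descends [e -> de] /parent_descends [e' -> de'] [ee'].
by subst e'; apply: descends_inj de de'.
Qed.

Lemma parent_image_sub : parent @: (reach :\ root) \subset Some @: B.
Proof.
apply/subsetP => _ /imsetP [u /parent_descends [e -> /andP [eB _]] ->].
exact: imset_f.
Qed.

Lemma card_reach : #|reach| = #|reach :\ root|.+1.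
Proof. by rewrite (cardsD1 root) inE connect0. Qed.

Lemma card_reach_le : #|reach| <= #|B| + 1.
Proof.
have := subset_leq_card parent_image_sub.
rewrite (card_in_imset parent_inj) (card_imset _ Some_inj).
by rewrite card_reach addn1.
Qed.

Lemma parent_onto e : #|B| < #|reach| -> e \in B ->
  exists2 u, u \in reach :\ root & parent u = Some e.
Proof.
move=> ltBr eB.
have onto : parent @: (reach :\ root) = Some @: B.
  apply/eqP; rewrite eqEcard parent_image_sub.
  rewrite (card_in_imset parent_inj) (card_imset _ Some_inj).
  by rewrite -ltnS -card_reach.
have /imsetP [u ur ue] : Some e \in parent @: (reach :\ root) by rewrite onto imset_f.
by exists u.
Qed.

Lemma addb_ends (f : V -> bool) u e : (src e == u) || (tgt e == u) ->
  f (src e) (+) f (tgt e) = f u (+) f (other_end u e).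
Proof. by rewrite /other_end; case: eqP => [-> //|_ /= /eqP ->]; rewrite addbC. Qed.

Lemma descends_end u e : descends u e -> (src e == u) || (tgt e == u).
Proof. by case/andP => _ /orP [] /andP [-> _]; rewrite ?orbT. Qed.

Variable sigma : E -> bool.

Fixpoint potential (n : nat) (u : V) : bool :=
  if n is n'.+1 then
    if parent u is Some e then potential n' (other_end u e) (+) sigma e else false
  else false.

Lemma potential_stable n m u :
  dist u < n -> dist u < m -> potential n u = potential m u.
Proof.
elim: n m u => [//|n IH] [//|m] u ltn ltm /=; rewrite /parent.
case: pickP => [e de|//]; have lt_other := dist_other_end de.
by rewrite (IH m) //; [exact: leq_trans lt_other ltn | exact: leq_trans lt_other ltm].
Qed.

Lemma potential_parent u e : u \in reach -> parent u = Some e -> descends u e ->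
  potential #|V| u = potential #|V| (other_end u e) (+) sigma e.
Proof.
move=> ur pe de; have /andP [_ du] := dist_reach ur.
have lt_other := dist_other_end de.
move: du lt_other; case: #|V| => [//|n] du lt_other /=.
rewrite pe (potential_stable (m := n.+1)) //.
  exact: leq_trans lt_other du.
exact: ltn_trans lt_other du.
Qed.

Lemma tree_coboundary : #|B| < #|reach| ->
  exists lam : V -> bool, forall e, e \in B -> lam (src e) (+) lam (tgt e) = sigma e.
Proof.
move=> ltBr; exists (potential #|V|) => e eB.
have [u /[dup] /setD1P [_ ur] /parent_descends [e' pe' de] pe] := parent_onto ltBr eB.
move: pe' de; rewrite pe => -[<-] de.
by rewrite (addb_ends _ (descends_end de)) (potential_parent ur pe de) addbC addKb.
Qed.
End SpanningTree.

Section Involution.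
Variables (X : finType) (c : X -> X).
Hypothesis cK : involutive c.

(* One representative of each two-element orbit of [c]. *)
Definition pair_reps : {set X} := [set x | enum_rank x < enum_rank (c x)].

Lemma pair_reps_moved x : x \in pair_reps -> c x != x.
Proof. by rewrite inE; apply: contraL => /eqP ->; rewrite ltnn. Qed.

Lemma pair_repsC x : c x != x -> (c x \in pair_reps) = (x \notin pair_reps).
Proof.
move=> cx; rewrite !inE cK; case: ltngtP => // /val_inj/enum_rank_inj cxx.
by rewrite cxx eqxx in cx.
Qed.

Lemma card_involution :
  #|X| = (#|[set x | c x == x]| + 2 * #|pair_reps|)%N.
Proof.
have moved : ~: [set x | c x == x] = pair_reps :|: c @: pair_reps.
  apply/setP => x; rewrite in_setC in_setU (can_imset_pre _ cK) [x \in _ @^-1: _]inE inE.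
  have [cx|cx] := eqVneq (c x) x; last by rewrite pair_repsC // orbN.
  by rewrite cx orbb; apply/esym/negP => /pair_reps_moved; rewrite cx eqxx.
have disj : pair_reps :&: c @: pair_reps = set0.
  by apply/setP => x; rewrite (can_imset_pre _ cK) !inE cK; lia.
rewrite -(cardsC [set x | c x == x]) moved cardsU disj cards0 subn0.
by rewrite card_imset; [lia | exact: can_inj cK].
Qed.
End Involution.

Lemma sum_nat_bool (I : finType) (A : {pred I}) (b : pred I) :
  (\sum_(i in A) (b i : nat))%N = #|[set i in A | b i]|.
Proof.
rewrite -sum1_card big_mkcond [RHS]big_mkcond /=; apply: eq_bigr => i _.
by rewrite !inE; case: (i \in A); case: (b i).
Qed.

Section RealCurve.
Variables (R : realType) (T : rtcurve R).
Local Notation V := (rV T).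
Local Notation E := (rE T).

Lemma fixed_edge_src (e : E) : conjE e = e -> conjV (src e) = src e.
Proof. by move=> ce; rewrite -conj_src ce. Qed.

Lemma fixed_edge_tgt (e : E) : conjE e = e -> conjV (tgt e) = tgt e.
Proof. by move=> ce; rewrite -conj_tgt ce. Qed.

Lemma real_adj_fixed (u w : V) : @real_adj R T u w -> (conjV u == u) && (conjV w == w).
Proof.
case/existsP => e /andP [/[!inE] /eqP ce].
by case/orP => /andP [/eqP <- /eqP <-]; rewrite fixed_edge_src ?fixed_edge_tgt ?eqxx.
Qed.

Lemma real_connect_sym : connect_sym (@real_adj R T).
Proof. exact: sym_connect_sym (edge_adj_sym (@src R T) (@tgt R T) (realE T)). Qed.

Lemma real_comp_fixed (v u : V) : conjV v == v -> u \in real_comp v -> conjV u == u.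
Proof.
move=> cv; rewrite inE => vu.
have fixed_closed : closed (@real_adj R T) [pred x | conjV x == x].
  by move=> x y /real_adj_fixed /andP [cx cy]; rewrite !inE cx cy.
by have := closed_connect fixed_closed vu; rewrite !inE cv.
Qed.

Lemma real_comp_eq (v w : V) : connect (@real_adj R T) v w -> real_comp v = real_comp w.
Proof. by move=> vw; apply/setP => x; rewrite !inE (same_connect real_connect_sym vw). Qed.

Lemma real_components_mem (w : V) : conjV w == w ->
  [set C in real_components T | w \in C] = [set real_comp w].
Proof.
move=> cw; apply/setP => C; rewrite !inE; apply/andP/eqP.
  by case=> /imsetP [v _ ->]; rewrite inE => /real_comp_eq.
by move=> ->; split; [apply: imset_f; rewrite inE | rewrite inE connect0].
Qed.

(* The vertices of the quotient graph T / conj: real components of T(R)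
   and pairs of conjugate vertices. *)
Definition vclass (v : V) : {set V} :=
  if conjV v == v then real_comp v else [set v; conjV v].

Lemma vclass_conj (v : V) : vclass (conjV v) = vclass v.
Proof.
rewrite /vclass conjV_inv; have [-> //|_] := eqVneq (conjV v) v.
by apply/setP => x; rewrite !inE orbC.
Qed.

Local Notation Ep := (pair_reps (@conjE R T)).
Local Notation Vp := (pair_reps (@conjV R T)).

Definition qsrc (e : E) : {set V} := vclass (src e).
Definition qtgt (e : E) : {set V} := vclass (tgt e).
Local Notation quot_adj := (edge_adj qsrc qtgt Ep).

Lemma quot_adj_graph_adj (x y : V) :
  graph_adj (@src R T) (@tgt R T) x y -> connect quot_adj (vclass x) (vclass y).
Proof.
case/existsP => e exy.
wlog: x y exy / (src e == x) && (tgt e == y).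
  move=> W; case/orP: exy => exy; first by apply: W => //; rewrite exy.
  by rewrite (sym_connect_sym (edge_adj_sym _ _ _)); apply: W => //; rewrite exy.
case/andP => /eqP <- /eqP <-.
have [ce|ce] := eqVneq (conjE e) e.
  have ra : @real_adj R T (src e) (tgt e) by apply/existsP; exists e; rewrite inE ce !eqxx.
  rewrite /vclass fixed_edge_src // fixed_edge_tgt // !eqxx.
  by rewrite (real_comp_eq (connect1 ra)) connect0.
apply: connect1; apply/existsP; case: (boolP (e \in Ep)) => eE.
  by exists e; rewrite eE /qsrc /qtgt !eqxx.
exists (conjE e); rewrite (pair_repsC (@conjE_inv R T)) // eE.
by rewrite /qsrc /qtgt conj_src conj_tgt !vclass_conj !eqxx.
Qed.

Lemma quot_connect (x y : V) :
  connect (graph_adj (@src R T) (@tgt R T)) x y -> connect quot_adj (vclass x) (vclass y).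
Proof.
case/connectP => p; elim: p x => [|z p IH] x /=; first by move=> _ ->.
by case/andP => xz pz ly; apply: connect_trans (quot_adj_graph_adj xz) (IH _ pz ly).
Qed.

Lemma card_quot_reach (v0 : V) :
  (#|real_components T| + #|Vp| <= #|reach qsrc qtgt Ep (vclass v0)|)%N.
Proof.
set pairs := [set [set v; conjV v] | v in Vp].
have in_reach x : vclass x \in reach qsrc qtgt Ep (vclass v0).
  by rewrite inE; apply/quot_connect/rconnected.
have sub : real_components T :|: pairs \subset reach qsrc qtgt Ep (vclass v0).
  apply/subsetP => X; rewrite inE => /orP [] /imsetP [v vX ->]; have := in_reach v.
    by rewrite /vclass; rewrite inE in vX; rewrite vX.
  by rewrite /vclass (negbTE (pair_reps_moved vX)).
have disj : real_components T :&: pairs = set0.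
  apply/setP => X; rewrite !inE; apply/negP => /andP [/imsetP [w cw ->] /imsetP [v vV wv]].
  rewrite inE in cw; have /negP := pair_reps_moved vV; apply.
  by apply: real_comp_fixed cw _; rewrite wv set21.
have card_pairs : #|pairs| = #|Vp|.
  apply: card_in_imset => v w vV wV vw.
  have : v \in [set w; conjV w] by rewrite -vw set21.
  rewrite !inE => /orP [/eqP //|/eqP vcw].
  by have := pair_repsC (@conjV_inv R T) (pair_reps_moved wV); rewrite -vcw vV wV.
by have := subset_leq_card sub; rewrite cardsU disj cards0 subn0 card_pairs.
Qed.

Section Sheets.
Variable lam : {set V} -> bool.
Hypothesis lam_cocycle : forall e, e \in Ep ->
  lam (qsrc e) (+) lam (qtgt e) = (src e \in Vp) (+) (tgt e \in Vp).

Definition sheet (v : V) : bool := (v \in Vp) (+) lam (vclass v).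

Lemma sheet_conj (v : V) : conjV v != v -> sheet (conjV v) = ~~ sheet v.
Proof. by move=> cv; rewrite /sheet (pair_repsC (@conjV_inv R T)) // vclass_conj addNb. Qed.

Lemma sheet_Ep (e : E) : e \in Ep -> sheet (src e) = sheet (tgt e).
Proof.
move/lam_cocycle; rewrite /sheet /qsrc /qtgt.
by case: (lam _); case: (lam _); case: (src e \in Vp); case: (tgt e \in Vp).
Qed.

Lemma sheet_edge (e : E) : conjE e != e ->
  conjV (src e) != src e -> conjV (tgt e) != tgt e -> sheet (src e) = sheet (tgt e).
Proof.
move=> ce cs ct; have [eE|eE] := boolP (e \in Ep); first exact: sheet_Ep.
have := @sheet_Ep (conjE e); rewrite (pair_repsC (@conjE_inv R T)) // => /(_ eE).
by rewrite conj_src conj_tgt !sheet_conj //; apply: negb_inj.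
Qed.

(* A non-real edge cell lies on the sheet of a non-real end. *)
Definition node_sheet (x : node T) : bool :=
  match x with
  | inl (inl v) => sheet v
  | inl (inr e) => if conjV (src e) != src e then sheet (src e) else sheet (tgt e)
  | inr l => sheet (base l)
  end.

Lemma node_sheet_incident (x y : node T) :
  nonreal x -> nonreal y -> incident x y -> node_sheet x = node_sheet y.
Proof.
case: x => [[v|e]|l]; case: y => [[w|f]|l'] //=; rewrite /nonreal /= => cx cy.
- case: ifP => cs /orP [] /eqP ew; subst w => //; first exact: sheet_edge.
  by rewrite cy in cs.
- by move/eqP <-.
Qed.

Lemma node_sheet_adj (x y : node T) : nr_adj x y -> node_sheet x = node_sheet y.
Proof.
case/and3P => cx cy /orP [] ?; first exact: node_sheet_incident.
exact/esym/node_sheet_incident.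
Qed.

Lemma node_sheet_conj (x y : node T) :
  nr_adj x y -> node_sheet (conjN x) = ~~ node_sheet x.
Proof.
case/and3P; case: x => [[v|e]|l]; case: y => [[w|f]|l'] //=; rewrite /nonreal /=;
  rewrite ?orbF => cx cy inc; try exact: sheet_conj.
- rewrite conj_src conj_tgt conjV_inv [src e == _]eq_sym.
  case: ifP => cs; first by rewrite sheet_conj.
  have ct : conjV (tgt e) != tgt e.
    by case/orP: inc => /eqP ew; subst w; rewrite // cs in cy.
  by rewrite sheet_conj.
- by rewrite conj_base sheet_conj //; move/eqP: inc => ->.
Qed.
End Sheets.

Lemma a_inv_card_le (v0 : V) :
  a_inv T -> (#|real_components T| + #|Vp| <= #|Ep|)%N.
Proof.
move=> /existsP [x /andP [cx x_cx]]; rewrite leqNgt; apply/negP => ltE.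
have [lam lam_cocycle] := tree_coboundary (fun e => (src e \in Vp) (+) (tgt e \in Vp))
  (leq_trans ltE (card_quot_reach v0)).
have closed_sheet : closed (@nr_adj R T) [pred z | node_sheet lam z == node_sheet lam x].
  by move=> y z /(node_sheet_adj lam_cocycle); rewrite !inE => ->.
have := closed_connect closed_sheet x_cx; rewrite !inE eqxx => /eqP.
case/connectP: x_cx => -[/= _ xx|y p /= /andP [xy _] _].
  by move: cx; rewrite /nonreal xx eqxx.
by rewrite (node_sheet_conj lam xy); case: (node_sheet lam x).
Qed.

Lemma sum_card_real_components (X : finType) (h : X -> V) (S : {set X}) :
  {in S, forall x, conjV (h x) == h x} ->
  (\sum_(C in real_components T) #|[set x in S | h x \in C]|)%N = #|S|.
Proof.
move=> hS.
transitivity (\sum_(C in real_components T) \sum_(x in S) (h x \in C : nat))%N.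
  by apply: eq_bigr => C _; rewrite sum_nat_bool.
rewrite exchange_big /= -sum1_card; apply: eq_bigr => x xS.
by rewrite sum_nat_bool (real_components_mem (hS x xS)) cards1.
Qed.

Lemma sum_card_real_comp :
  (\sum_(C in real_components T) #|C|)%N = #|realV T|.
Proof.
rewrite -(@sum_card_real_components _ id); last by move=> x; rewrite inE.
apply: eq_bigr => C /imsetP [w /[!inE] cw ->]; apply: eq_card => x.
by rewrite !inE andb_idl // => wx; apply: (real_comp_fixed cw); rewrite inE.
Qed.

Local Open Scope ring_scope.

Lemma s_inv_count :
  s_inv T = (#|realE T| + 2 * #|real_components T|)%N%:Z - #|realV T|%:Z.
Proof.
transitivity (\sum_(C in real_components T)
   ((#|[set e in realE T | src e \in C]| + 2)%N%:Z - #|C|%:Z)).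
  by apply: eq_bigr => C _; rewrite /comp_genus; lia.
rewrite sumrB -!(big_morph Posz PoszD (erefl _)) big_split /= sum_nat_const.
by rewrite (sum_card_real_components (h := @src R T)) ?sum_card_real_comp
  1?mulnC // => e /[!inE] /eqP /fixed_edge_src ->.
Qed.

Lemma genus_s_inv_gap : genus T + 1 - s_inv T =
  2 * (#|Ep|%:Z + 1 - #|real_components T|%:Z - #|Vp|%:Z).
Proof.
rewrite s_inv_count /genus (card_involution (@conjE_inv R T)).
rewrite (card_involution (@conjV_inv R T)) -/(realE T) -/(realV T); lia.
Qed.
End RealCurve.

Local Open Scope ring_scope.

Theorem proposition5 (R : realType) (T : rtcurve R) :
  s_inv T <= genus T + 1 /\
  (s_inv T = genus T + 1 %[mod 2])%Z /\
  (a_inv T -> s_inv T <= genus T - 1).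
Proof.
have [v0 _] := card_gt0P (rV_nonempty T).
have quot_card := leq_trans (card_quot_reach v0) (card_reach_le _ _ _ _).
have := genus_s_inv_gap T; set k := (_ + 1 - _ - _) => gap.
split; first lia.
split; last by move=> /(a_inv_card_le v0); lia.
by apply/eqP; rewrite eqz_mod_dvd; apply/dvdzP; exists (- k); lia.
Qed.
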